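(* Let $T$ be a string of length $n$ and $1\le i\le j<n$. For any interval $[s,t]$ with $i\le s<t\le j$, we have $[s,t]\in\mathsf{MUS}(T[i..j])$ and $[s,t]\notin\mathsf{MUS}(T[i..j+1])$ if and only if $T[s..t]=\mathit{sqs}_{i,j+1}$ (as strings) and $\#\mathit{occ}_{T[i..j+1]}(\mathit{sqs}_{i,j+1})=2$.
   Context: $T[a..b]$ denotes the substring of $T$ from position $a$ to $b$. For strings $S,w$, $\#\mathit{occ}_S(w)$ is the number of positions at which $w$ occurs in $S$, with $\#\mathit{occ}_S(\varepsilon)=|S|+1$. A substring $w$ of $S$ is unique in $S$ if $\#\mathit{occ}_S(w)=1$ and repeating if $\#\mathit{occ}_S(w)\ge 2$. For $1\le i\le j\le n$, $\mathsf{MUS}(T[i..j])$ is the set of intervals $[s,t]$ (positions in $T$) with $i\le s\le t\le j$ such that $T[s..t]$ is unique in $T[i..j]$ and every proper substring of $T[s..t]$ (including the empty string) is repeating in $T[i..j]$. $\mathit{sqs}_{i,j}$ is the shortest suffix of $T[i..j]$ that occurs at most twice in $T[i..j]$. *)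

From mathcomp Require Import all_boot.
Set Implicit Arguments. Unset Strict Implicit. Unset Printing Implicit Defensive.

(* T[a..b] with 1-based positions: the substring from position a to b. *)
Definition substr (A : eqType) (T : seq A) (a b : nat) : seq A :=
  take (b.+1 - a) (drop a.-1 T).

(* #occ_S(w): number of positions at which w occurs in S; #occ_S(eps) = |S|+1. *)
Definition occ (A : eqType) (S w : seq A) : nat :=
  count (fun p => take (size w) (drop p S) == w) (iota 0 (size S - size w).+1).

Definition unique_in (A : eqType) (S w : seq A) : bool := occ S w == 1.
Definition repeating_in (A : eqType) (S w : seq A) : bool := 1 < occ S w.

Definition inMUS (A : eqType) (T : seq A) (i j s t : nat) : Prop :=
  [/\ i <= s, s <= t, t <= j,
      unique_in (substr T i j) (substr T s t) &
      forall w : seq A, infix w (substr T s t) -> size w < size (substr T s t) ->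
        repeating_in (substr T i j) w].

Definition shortest_suffix_le2 (A : eqType) (S : seq A) : seq A :=
  let k := find (fun k => occ S (drop (size S - k) S) <= 2) (iota 0 (size S).+1) in
  drop (size S - k) S.

Definition sqs (A : eqType) (T : seq A) (i j : nat) : seq A :=
  shortest_suffix_le2 (substr T i j).

From mathcomp Require Import all_boot zify.
Set Implicit Arguments. Unset Strict Implicit. Unset Printing Implicit Defensive.

(* Appending a character c to S increases the number of occurrences of w by
   one if w is a suffix of S c, and leaves it unchanged otherwise.  So a MUS u
   of S stops being one exactly when it becomes a suffix of S c, occurring
   twice there; its proper suffixes were repeating in S and are suffixes of
   S c, so they occur at least three times in S c, and u is the shortest
   suffix of S c occurring at most twice.  Conversely, let u be that suffix and
   assume it occurs twice in S c.  Then u is unique in S, its proper suffixes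
   occur at least three times in S c hence twice in S, and every other proper
   infix of u occurs both inside the occurrence of u in S and inside the suffix
   occurrence of u in S c, which ends before c. *)

Section Occurrences.

Variable A : eqType.
Implicit Types (S u w x y : seq A) (c : A).

Lemma take_drop_rcons S c w q : q + size w <= size S ->
  take (size w) (drop q (rcons S c)) = take (size w) (drop q S).
Proof. by move=> le_qw; rewrite !take_drop -cats1 takel_cat // addnC. Qed.

Lemma occ_rcons S c w : occ (rcons S c) w = occ S w + suffix w (rcons S c).
Proof.
rewrite /occ suffixE size_rcons.
have [lt_S_w|le_w_S] := ltnP (size S) (size w).
  have [-> ->] : size S - size w = 0 /\ (size S).+1 - size w = 0 by lia.
  rewrite /= !drop0 !take_oversize ?size_rcons ?(ltnW lt_S_w) //.
  have /negbTE -> : S != w by apply: contraTneq lt_S_w => ->; rewrite ltnn.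
  by rewrite addn0.
have -> : ((size S).+1 - size w).+1 = (size S - size w).+1 + 1 by lia.
rewrite iotaD count_cat add0n; congr (_ + _).
  apply: eq_in_count => q; rewrite mem_iota => /andP[_ lt_q].
  by rewrite take_drop_rcons //; lia.
rewrite /= addn0 take_oversize; last by rewrite size_drop size_rcons; lia.
by have -> : (size S - size w).+1 = (size S).+1 - size w by lia.
Qed.

Lemma occ_rcons_le S c w : occ (rcons S c) w <= (occ S w).+1.
Proof. by rewrite occ_rcons -addn1 leq_add2l leq_b1. Qed.

Lemma leq_occ_rcons S c w : occ S w <= occ (rcons S c) w.
Proof. by rewrite occ_rcons leq_addr. Qed.

Lemma occ_gt0_infix S w : 0 < occ S w -> infix w S.
Proof.
rewrite /occ -has_count => /hasP[p _ /eqP Ew]; apply/infixP.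
exists (take p S), (drop (size w) (drop p S)).
by rewrite -[X in _ ++ X ++ _]Ew !cat_take_drop.
Qed.

Lemma occ_gt1 S w x1 y1 x2 y2 :
  S = x1 ++ w ++ y1 -> S = x2 ++ w ++ y2 -> size x1 != size x2 -> 1 < occ S w.
Proof.
have occ_at x y : S = x ++ w ++ y ->
    size x \in [seq p <- iota 0 (size S - size w).+1
                | take (size w) (drop p S) == w].
  move=> ES; rewrite mem_filter mem_iota {1}ES.
  rewrite drop_size_cat // take_size_cat //.
  by rewrite eqxx ES !size_cat; apply/andP; split=> //; lia.
move=> E1 E2 ne; rewrite /occ -size_filter.
apply: (@leq_trans (size [:: size x1; size x2])) => //.
apply: uniq_leq_size; first by rewrite /= inE ne.
move=> p; rewrite !inE => /orP[] /eqP ->; [exact: occ_at E1 | exact: occ_at E2].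
Qed.

Lemma suffix_shorter u w S :
  suffix u S -> suffix w S -> size w <= size u -> suffix w u.
Proof.
rewrite !suffixE => /eqP Eu /eqP Ew le_wu.
rewrite -Eu drop_drop size_drop -{2}Ew; apply/eqP; congr drop.
have := size_drop (size S - size u) S; rewrite Eu; lia.
Qed.

End Occurrences.

Section ShortestSuffix.

Variables (A : eqType) (X : seq A).

Let at_most_twice k := occ X (drop (size X - k) X) <= 2.

Let has_at_most_twice : has at_most_twice (iota 0 (size X).+1).
Proof.
apply/hasP; exists (size X); first by rewrite mem_iota add0n ltnSn.
by rewrite /at_most_twice subnn drop0 /occ subnn /= drop0 take_size eqxx.
Qed.

Let size_shortest_suffix_le2 :
  size (shortest_suffix_le2 X) = find at_most_twice (iota 0 (size X).+1).
Proof.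
have := has_at_most_twice; rewrite has_find size_iota => lt_find.
by rewrite [LHS]size_drop -/at_most_twice; lia.
Qed.

Lemma suffix_shortest_suffix_le2 : suffix (shortest_suffix_le2 X) X.
Proof. exact: suffix_drop. Qed.

Lemma occ_shortest_suffix_le2 : occ X (shortest_suffix_le2 X) <= 2.
Proof.
have := nth_find 0 has_at_most_twice; rewrite nth_iota ?add0n //.
by have := has_at_most_twice; rewrite has_find size_iota.
Qed.

Lemma shortest_suffix_le2_min w :
  suffix w X -> size w < size (shortest_suffix_le2 X) -> 2 < occ X w.
Proof.
rewrite suffixE size_shortest_suffix_le2 => /eqP Ew lt_w_find.
have := before_find 0 lt_w_find; rewrite nth_iota; last first.
  have := find_size at_most_twice (iota 0 (size X).+1).
  by rewrite size_iota; lia.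
by rewrite add0n /at_most_twice Ew ltnNge => ->.
Qed.

Lemma shortest_suffix_le2_unique v :
  suffix v X -> occ X v <= 2 ->
  (forall w, suffix w X -> size w < size v -> 2 < occ X w) ->
  shortest_suffix_le2 X = v.
Proof.
move=> suf_v occ_v min_v.
case: (ltngtP (size v) (size (shortest_suffix_le2 X))) => [lt|gt|eq_size].
- by have := shortest_suffix_le2_min suf_v lt; rewrite ltnNge occ_v.
- have := min_v _ suffix_shortest_suffix_le2 gt.
  by rewrite ltnNge occ_shortest_suffix_le2.
- move: suf_v suffix_shortest_suffix_le2; rewrite !suffixE eq_size.
  by move=> /eqP <- /eqP.
Qed.

End ShortestSuffix.

Definition minimal_unique_in (A : eqType) (X u : seq A) :=
  unique_in X u /\ forall w, infix w u -> size w < size u -> repeating_in X w.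

Section MinimalUnique.

Variables (A : eqType) (S : seq A) (c : A).
Implicit Types u w : seq A.

Local Notation S' := (rcons S c).

Lemma minimal_unique_lost u :
  minimal_unique_in S u -> ~ minimal_unique_in S' u ->
  suffix u S' /\ occ S' u = 2.
Proof.
move=> [/eqP occ_u rep_u] not_mu; rewrite occ_rcons occ_u.
case suf_u: (suffix u S') => //; case: not_mu; split.
  by rewrite /unique_in occ_rcons occ_u suf_u.
move=> w inf_w lt_wu; apply: leq_trans (rep_u w inf_w lt_wu) _.
exact: leq_occ_rcons.
Qed.

Lemma shortest_suffix_le2_of_lost u :
  minimal_unique_in S u -> suffix u S' -> occ S' u = 2 ->
  shortest_suffix_le2 S' = u.
Proof.
move=> [_ rep_u] suf_u occ_u; apply: shortest_suffix_le2_unique => //.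
  by rewrite occ_u.
move=> w suf_w lt_wu; have suf_wu := suffix_shorter suf_u suf_w (ltnW lt_wu).
have := rep_u w (suffixW suf_wu) lt_wu.
by rewrite /repeating_in occ_rcons suf_w addn1.
Qed.

Lemma minimal_unique_shortest_suffix_le2 :
  occ S' (shortest_suffix_le2 S') = 2 ->
  minimal_unique_in S (shortest_suffix_le2 S').
Proof.
set u := shortest_suffix_le2 S'; move=> occ_u.
have suf_u : suffix u S' := suffix_shortest_suffix_le2 S'.
have occS_u : occ S u = 1 by move: occ_u; rewrite occ_rcons suf_u addn1 => -[].
split=> [|w]; first by rewrite /unique_in occS_u.
move=> /infixP[a [b Eu]] lt_wu.
case/lastP: b Eu => [|b e] Eu.
  have suf_w : suffix w S'.
    by apply: suffix_trans suf_u; rewrite Eu cats0 suffix_suffix.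
  have := shortest_suffix_le2_min suf_w lt_wu.
  by rewrite /repeating_in; have := occ_rcons_le S c w; lia.
have /infixP[x [y ES]] : infix u S by apply: occ_gt0_infix; rewrite occS_u.
have /suffixP[z ES'] := suf_u.
have [ES2 _] : (S, c) = ((z ++ a) ++ w ++ b, e).
  by apply: rcons_inj; rewrite ES' Eu !rcons_cat catA.
apply: (occ_gt1 (x1 := x ++ a) (y1 := rcons b e ++ y) _ ES2).
  by rewrite ES Eu -!catA.
have := congr1 size ES; have := congr1 size ES'.
by rewrite Eu !size_cat !size_rcons; lia.
Qed.

Lemma minimal_unique_rconsP u :
  (minimal_unique_in S u /\ ~ minimal_unique_in S' u) <->
  (u = shortest_suffix_le2 S' /\ occ S' (shortest_suffix_le2 S') = 2).
Proof.
split=> [[mu_u not_mu]|[-> occ_u]].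
  have [suf_u occ_u] := minimal_unique_lost mu_u not_mu.
  by rewrite (shortest_suffix_le2_of_lost mu_u suf_u occ_u).
split; first exact: minimal_unique_shortest_suffix_le2.
by case; rewrite /unique_in occ_u.
Qed.

End MinimalUnique.

Lemma inMUS_minimal_unique (A : eqType) (T : seq A) i k s t :
  i <= s -> s <= t -> t <= k ->
  inMUS T i k s t <-> minimal_unique_in (substr T i k) (substr T s t).
Proof. by move=> *; split=> [[]|[]]. Qed.

Lemma substrS (A : eqType) (T : seq A) i j :
  0 < i -> i <= j.+1 -> j < size T ->
  exists c, substr T i j.+1 = rcons (substr T i j) c.
Proof.
case: T => [//|x0 T'] i_gt0 le_ij lt_j_size.
exists (nth x0 (drop i.-1 (x0 :: T')) (j.+1 - i)).
rewrite /substr -take_nth; last by rewrite size_drop; lia.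
by congr take; lia.
Qed.

Theorem lemma3 (A : eqType) (T : seq A) (i j : nat) :
  1 <= i -> i <= j -> j < size T ->
  forall s t : nat, i <= s -> s < t -> t <= j ->
  (inMUS T i j s t /\ ~ inMUS T i j.+1 s t) <->
  (substr T s t = sqs T i j.+1 /\ occ (substr T i j.+1) (sqs T i j.+1) = 2).
Proof.
move=> i_gt0 le_ij lt_j_size s t le_is lt_st le_tj.
rewrite (inMUS_minimal_unique _ le_is (ltnW lt_st) le_tj).
rewrite (inMUS_minimal_unique _ le_is (ltnW lt_st) (leqW le_tj)).
rewrite /sqs; have [c ->] := substrS i_gt0 (leqW le_ij) lt_j_size.
exact: minimal_unique_rconsP.
Qed.
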